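(* Let $\mathcal X=(\Omega,S)$ be a scheme with $n=|\Omega|$ such that $4c(m-1)<n$, where $c=c(\mathcal X)$ and $m=n_{\max}$. Then for every $\alpha\in\Omega$ the coherent configuration $\mathcal X_\alpha$ is $1$-regular. In particular, $b(\mathcal X)\le 2$.
   Context: A coherent configuration on a finite set $\Omega$ is $(\Omega,S)$ with $S$ a partition of $\Omega\times\Omega$ such that $1_\Omega$ is a union of elements of $S$, $s^*=\{(\beta,\alpha):(\alpha,\beta)\in s\}\in S$, and for $r,s,t\in S$ the number $|\{\gamma:(\alpha,\gamma)\in r,(\gamma,\beta)\in s\}|$ is independent of $(\alpha,\beta)\in t$; it is a scheme if $1_\Omega\in S$. Valency of $r\in S$ in a scheme: $n_r=|\{\beta:(\alpha,\beta)\in r\}|$ (independent of $\alpha$); $n_{\max}=\max_{r\in S}n_r$. For $\alpha,\beta\in\Omega$, $r(\alpha,\beta)$ is the element of $S$ containing $(\alpha,\beta)$. For $s\in S$ and $(\alpha,\beta)\in s$, the indistinguishing number $c(s)=|\{\gamma\in\Omega: r(\alpha,\gamma)=r(\beta,\gamma)\}|$ (independent of the choice of $(\alpha,\beta)$); $c(\mathcal X)$ is the maximum of $c(s)$ over $s\in S$, $s\ne 1_\Omega$. Fibers: sets $\Gamma$ with $1_\Gamma\in S$. Fission: configuration on $\Omega$ whose relations (unions of basic relations) include those of $\mathcal X$; complete: all basic relations singletons. $\mathcal X_\alpha$ is the smallest fission in which $\{\alpha\}$ is a fiber. A coherent configuration $(\Omega,T)$ is $1$-regular if some point $\gamma$ satisfies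 $|\{\delta:(\gamma,\delta)\in t\}|\le1$ for all $t\in T$. A set $B$ is a base if the smallest fission in which all $\{\beta\}$, $\beta\in B$, are fibers is complete; $b(\mathcal X)$ is the minimal size of a base. *)

From mathcomp Require Import all_boot all_order.
Set Implicit Arguments. Unset Strict Implicit. Unset Printing Implicit Defensive.

Section CC.
Variable Omega : finType.
Notation rel2 := {set (Omega * Omega)}.

Definition diag_on (G : {set Omega}) : rel2 := [set (x, x) | x in G].
Definition diag : rel2 := diag_on [set: Omega].

Definition is_union (S : {set rel2}) (A : rel2) : Prop :=
  exists U : {set rel2}, U \subset S /\ cover U = A.

Definition transp (s : rel2) : rel2 := [set (x.2, x.1) | x in s].

Definition inter_count (r s : rel2) (a b : Omega) : nat :=
  #|[set g | ((a, g) \in r) && ((g, b) \in s)]|.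

Definition is_cc (S : {set rel2}) : Prop :=
  [/\ partition S [set: Omega * Omega],
      is_union S diag,
      (forall s, s \in S -> transp s \in S) &
      (forall r s t, r \in S -> s \in S -> t \in S ->
        forall p q, p \in t -> q \in t ->
          inter_count r s p.1 p.2 = inter_count r s q.1 q.2)].

Definition is_scheme (S : {set rel2}) : Prop := is_cc S /\ diag \in S.

Definition rel_of (S : {set rel2}) (a b : Omega) : rel2 := pblock S (a, b).

(* valency of r at alpha; in a scheme independent of alpha *)
Definition valency (r : rel2) (a : Omega) : nat := #|[set b | (a, b) \in r]|.
Definition nmax (S : {set rel2}) : nat := \max_(r in S) \max_(a : Omega) valency r a.

(* indistinguishing number of a pair; c(s) is its common value on s *)
Definition indist (S : {set rel2}) (a b : Omega) : nat :=
  #|[set g | rel_of S a g == rel_of S b g]|.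
Definition c_rel (S : {set rel2}) (s : rel2) : nat := \max_(p in s) indist S p.1 p.2.
Definition cX (S : {set rel2}) : nat := \max_(s in S | s != diag) c_rel S s.

Definition fission (S T : {set rel2}) : Prop :=
  is_cc T /\ forall s, s \in S -> is_union T s.

Definition complete (T : {set rel2}) : Prop := forall t, t \in T -> #|t| = 1.

Definition is_fiber (T : {set rel2}) (G : {set Omega}) : Prop := diag_on G \in T.

Definition smallest_fission (S : {set rel2}) (P : {set rel2} -> Prop)
    (T : {set rel2}) : Prop :=
  [/\ fission S T, P T &
      forall T', fission S T' -> P T' -> fission T T'].

Definition point_ext (S : {set rel2}) (a : Omega) (T : {set rel2}) : Prop :=
  smallest_fission S (fun T => is_fiber T [set a]) T.

Definition one_regular (T : {set rel2}) : Prop :=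
  exists g : Omega, forall t, t \in T -> #|[set d | (g, d) \in t]| <= 1.

Definition is_base (S : {set rel2}) (B : {set Omega}) : Prop :=
  forall T, smallest_fission S (fun T => forall b, b \in B -> is_fiber T [set b]) T ->
    complete T.

End CC.

From mathcomp Require Import all_boot all_order.
From mathcomp Require Import zify.
Set Implicit Arguments. Unset Strict Implicit. Unset Printing Implicit Defensive.

(* Call x determined by (a, g) when no other point y has r(a, y) = r(a, x) and
   r(y, g) = r(x, g).  Double counting the confused triples (g, x, y) shows that
   for some g at most c(m - 1) points are undetermined, hence more than c points
   are determined.  In a fission in which {a} is a fiber, every determined x is
   the only point in its relation from g, and coherence then makes the relation
   of (g, d) determine that of (x, d).  So two distinct points d, d' in the same
   relation from g would satisfy r(d, x) = r(d', x) for more than c points x,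
   which is impossible: X_a is 1-regular at g, and a fission with fibers {a} and
   {g} is complete. *)

Section CoherentConfigurations.
Variable Omega : finType.
Notation rel2 := {set (Omega * Omega)}.

Lemma in_diag (x y : Omega) : ((x, y) \in diag Omega) = (x == y).
Proof. by apply/imsetP/eqP => [[w _ [-> ->]] //|->]; exists y. Qed.

Lemma in_diag_on1 (z x y : Omega) :
  ((x, y) \in diag_on [set z]) = (x == z) && (y == z).
Proof.
apply/imsetP/andP => [[w]|[/eqP-> /eqP->]]; last by exists z; rewrite ?inE.
by rewrite inE => /eqP -> [-> ->].
Qed.

Section Coherent.
Variable T : {set rel2}.
Hypothesis ccT : is_cc T.

Definition isolated (g x : Omega) : Prop :=
  forall y, pblock T (g, y) = pblock T (g, x) -> y = x.

Definition regular_at (g : Omega) : Prop := forall x, isolated g x.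

Lemma mem_pblock_cc p : p \in pblock T p.
Proof. by case: ccT => /and3P[/eqP covT _ _] _ _ _; rewrite mem_pblock covT inE. Qed.

Lemma pblock_cc p : pblock T p \in T.
Proof. by case: ccT => /and3P[/eqP covT _ _] _ _ _; rewrite pblock_mem ?covT. Qed.

Lemma def_pblock_cc t p : t \in T -> p \in t -> pblock T p = t.
Proof. by case: ccT => /and3P[_ trivT _] _ _ _; apply: def_pblock. Qed.

Lemma same_pblock_cc p q : q \in pblock T p -> pblock T q = pblock T p.
Proof. exact/def_pblock_cc/pblock_cc. Qed.

Lemma pblock_transp a b a' b' :
  pblock T (a, b) = pblock T (a', b') -> pblock T (b, a) = pblock T (b', a').
Proof.
move=> E; have [_ _ transpT _] := ccT.
have tT := transpT _ (pblock_cc (a, b)).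
have ba : (b, a) \in transp (pblock T (a, b)).
  by apply/imsetP; exists (a, b); rewrite ?mem_pblock_cc.
have ba' : (b', a') \in transp (pblock T (a, b)).
  by apply/imsetP; exists (a', b'); rewrite ?E ?mem_pblock_cc.
by rewrite (def_pblock_cc tT ba) (def_pblock_cc tT ba').
Qed.

Lemma pblock_triangle a b a' b' g : pblock T (a, b) = pblock T (a', b') ->
  exists y, pblock T (a', y) = pblock T (a, g) /\ pblock T (y, b') = pblock T (g, b).
Proof.
move=> E; have [_ _ _ cohT] := ccT.
have : inter_count (pblock T (a, g)) (pblock T (g, b)) a b =
       inter_count (pblock T (a, g)) (pblock T (g, b)) a' b'.
  apply: (cohT _ _ (pblock T (a, b)) _ _ _ (a, b) (a', b'));
    by rewrite ?pblock_cc ?mem_pblock_cc // E mem_pblock_cc.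
rewrite /inter_count => count_eq.
have : 0 < #|[set y | ((a', y) \in pblock T (a, g)) && ((y, b') \in pblock T (g, b))]|.
  by rewrite -count_eq; apply/card_gt0P; exists g; rewrite inE !mem_pblock_cc.
case/card_gt0P => y; rewrite inE => /andP[ay yb]; exists y.
by rewrite (same_pblock_cc ay) (same_pblock_cc yb).
Qed.

Lemma pblock_fiber1 z p p' y : diag_on [set z] \in T ->
  pblock T (p', y) = pblock T (p, z) -> y = z.
Proof.
move=> Dz /esym/(pblock_triangle z) [w [_ Ewy]].
have : (w, y) \in diag_on [set z].
  by rewrite -(def_pblock_cc Dz (_ : (z, z) \in _)) -?Ewy ?mem_pblock_cc ?in_diag_on1 ?eqxx.
by rewrite in_diag_on1 => /andP[_ /eqP].
Qed.

Lemma isolated_fiber1 g z : diag_on [set z] \in T -> isolated g z.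
Proof. by move=> Dz y; apply: pblock_fiber1. Qed.

Lemma pblock_isolated g x d d' : isolated g x ->
  pblock T (g, d) = pblock T (g, d') -> pblock T (x, d) = pblock T (x, d').
Proof.
move=> iso_x /(pblock_triangle x) [y [Egy Eyd]].
by rewrite -Eyd (iso_x y Egy).
Qed.

Lemma regular_at_row_card g : regular_at g ->
  forall t, t \in T -> #|[set d | (g, d) \in t]| <= 1.
Proof.
move=> reg t tT; apply/card_le1_eqP => d d'; rewrite !inE => gd gd'.
by apply: reg; rewrite (def_pblock_cc tT gd) (def_pblock_cc tT gd').
Qed.

Lemma complete_regular_fiber g : diag_on [set g] \in T -> regular_at g -> complete T.
Proof.
move=> Dg reg t tT; have [/and3P[_ _ t0] _ _ _] := ccT.
have /set0Pn [[p q] pq] : t != set0 by apply: contraNneq t0 => <-.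
apply/eqP/cards1P; exists (p, q); apply/setP => [[p' q']]; rewrite inE.
apply/idP/eqP => [pq'|[-> ->] //].
have E : pblock T (p, q) = pblock T (p', q').
  by rewrite (def_pblock_cc tT pq) (def_pblock_cc tT pq').
have [y [Epy Eyq]] := pblock_triangle g E.
have y_g := pblock_fiber1 Dg Epy; subst y.
by rewrite (reg q q' Eyq) (reg p p' (pblock_transp Epy)).
Qed.

End Coherent.

Lemma fission_pblock (S T : {set rel2}) p q : is_cc S -> fission S T ->
  pblock T p = pblock T q -> pblock S p = pblock S q.
Proof.
move=> ccS [ccT unionT] E.
have [U [UT covU]] := unionT _ (pblock_cc ccS p).
have : p \in cover U by rewrite covU mem_pblock_cc.
case/bigcupP => u uU pu.
have Tp : pblock T p = u by apply: def_pblock_cc (subsetP UT _ uU) pu.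
have qU : q \in cover U by apply/bigcupP; exists u; rewrite // -Tp E mem_pblock_cc.
by rewrite covU in qU; rewrite (same_pblock_cc ccS qU).
Qed.

Section Determined.
Variable S : {set rel2}.
Hypothesis ccS : is_cc S.

Definition confused (a g x y : Omega) : bool :=
  [&& y != x, rel_of S a y == rel_of S a x & rel_of S y g == rel_of S x g].

Definition determined (a g : Omega) : {set Omega} :=
  [set x | [forall y, ~~ confused a g x y]].

Lemma indist_le_cX d d' : d != d' -> indist S d d' <= cX S.
Proof.
move=> dd'; have sS := pblock_cc ccS (d, d').
have s_diag : pblock S (d, d') != diag Omega.
  by apply: contra dd' => /eqP E; rewrite -in_diag -E mem_pblock_cc.
apply: leq_trans (leq_bigmax_cond (pblock S (d, d')) (introT andP (conj sS s_diag))).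
exact: (leq_bigmax_cond (d, d') (mem_pblock_cc ccS (d, d'))).
Qed.

Lemma card_rel_of_eq_le a x : #|[set y | rel_of S a y == rel_of S a x]| <= nmax S.
Proof.
apply: (@leq_trans (valency (pblock S (a, x)) a)).
  apply: subset_leq_card; apply/subsetP => y; rewrite !inE /rel_of => /eqP <-.
  exact: mem_pblock_cc.
apply: leq_trans (leq_bigmax a) _.
exact: (leq_bigmax_cond (F := fun r => \max_(b : Omega) valency r b)
          (pblock S (a, x)) (pblock_cc ccS _)).
Qed.

Lemma card_undetermined a g :
  #|~: determined a g| <= \sum_x #|[set y | confused a g x y]|.
Proof.
rewrite -sum1_card big_mkcond /=; apply: leq_sum => x _.
case: ifP => //; rewrite !inE negb_forall => /existsP[y /negPn xy].
by apply/card_gt0P; exists y; rewrite inE.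
Qed.

Lemma sum_confused_le a x :
  \sum_g #|[set y | confused a g x y]| <= cX S * (nmax S - 1).
Proof.
pose same_from_a y := (y != x) && (rel_of S a y == rel_of S a x).
apply: (@leq_trans (\sum_(y | same_from_a y) cX S)).
  rewrite (eq_bigr (fun g => \sum_y (confused a g x y : nat))); last first.
    by move=> g _; rewrite -sum1_card big_mkcond /=; apply: eq_bigr => y _; rewrite inE.
  rewrite exchange_big [X in _ <= X]big_mkcond /=; apply: leq_sum => y _.
  rewrite /same_from_a /confused; have [->|yx] := eqVneq y x; first by rewrite eqxx big1.
  case: eqP => _ /=; last by rewrite big1.
  apply: leq_trans (indist_le_cX yx); rewrite /indist -sum1_card [X in _ <= X]big_mkcond.
  by apply: leq_sum => g _; rewrite inE.
rewrite sum_nat_const mulnC leq_mul2l; apply/orP; right.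
have := card_rel_of_eq_le a x; rewrite (cardsD1 x) inE eqxx add1n => card_le.
apply: leq_trans (leq_sub2r 1 card_le); rewrite subn1 /=.
by apply: subset_leq_card; apply/subsetP => y; rewrite !inE.
Qed.

Lemma exists_large_determined a : cX S + cX S * (nmax S - 1) < #|Omega| ->
  exists g, cX S < #|determined a g|.
Proof.
move=> large.
have total : \sum_g #|~: determined a g| <= #|Omega| * (cX S * (nmax S - 1)).
  apply: (@leq_trans (\sum_g \sum_x #|[set y | confused a g x y]|)).
    by apply: leq_sum => g _; apply: card_undetermined.
  rewrite exchange_big -sum_nat_const; apply: leq_sum => x _.
  exact: sum_confused_le.
case: (pickP (fun g => cX S < #|determined a g|)) => [g ? | small]; first by exists g.
have bound : #|Omega| * (#|Omega| - cX S) <= #|Omega| * (cX S * (nmax S - 1)).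
  apply: leq_trans total; rewrite -sum_nat_const; apply: leq_sum => g _.
  by rewrite cardsCs setCK leq_sub2l // leqNgt small.
have n_gt0 : 0 < #|Omega| by apply: leq_ltn_trans large.
rewrite leq_mul2l gtn_eqF //= in bound; exfalso.
by move: large bound; set n := #|Omega|; lia.
Qed.

Lemma isolated_determined T a g x : fission S T -> diag_on [set a] \in T ->
  x \in determined a g -> isolated T g x.
Proof.
move=> fST Da; rewrite inE => /forallP x_det y Egy.
apply: contraNeq (x_det y) => yx; rewrite /confused yx /rel_of /=.
rewrite (fission_pblock ccS fST (pblock_isolated fST.1 (isolated_fiber1 fST.1 Da) Egy)).
by rewrite (fission_pblock ccS fST (pblock_transp fST.1 Egy)) !eqxx.
Qed.

Lemma regular_at_determined T a g : fission S T -> diag_on [set a] \in T ->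
  cX S < #|determined a g| -> regular_at T g.
Proof.
move=> fST Da large d d' E; apply/eqP; apply: contraLR large => dd'.
rewrite -leqNgt; apply: leq_trans (indist_le_cX dd'); apply: subset_leq_card.
apply/subsetP => x x_det; rewrite inE /rel_of.
have Ex := pblock_isolated fST.1 (isolated_determined fST Da x_det) E.
by rewrite (pblock_transp ccS (fission_pblock ccS fST Ex)).
Qed.

End Determined.

Lemma cX_lt_card (S : {set rel2}) : is_scheme S -> 0 < #|Omega| -> cX S < #|Omega|.
Proof.
move=> [ccS diagS] n_gt0; rewrite -(prednK n_gt0) ltnS.
apply/bigmax_leqP => s /andP[sS s_diag]; apply/bigmax_leqP => [[x y]] /= xy_s.
have xy : x != y.
  apply: contra s_diag => /eqP eq_xy; subst y.
  by rewrite -(def_pblock_cc ccS sS xy_s) (def_pblock_cc ccS diagS) ?in_diag.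
rewrite -ltnS prednK // -cardsT; apply: proper_card; apply/properP; split=> //.
exists x => //; rewrite inE /rel_of (def_pblock_cc ccS diagS) ?in_diag //.
apply/eqP => E; have := mem_pblock_cc ccS (y, x).
by rewrite -E in_diag eq_sym (negbTE xy).
Qed.

End CoherentConfigurations.

Unset Implicit Arguments.

Theorem theorem8p1 (Omega : finType) (S : {set {set (Omega * Omega)}}) :
  is_scheme S ->
  4 * cX S * (nmax S - 1) < #|Omega| ->
  (forall (a : Omega) (T : {set {set (Omega * Omega)}}), point_ext S a T -> one_regular T) /\
  (exists B : {set Omega}, is_base S B /\ #|B| <= 2).
Proof.
move=> sch large; have ccS := sch.1.
have n_gt0 : 0 < #|Omega| by apply: leq_ltn_trans large.
have large' : cX S + cX S * (nmax S - 1) < #|Omega|.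
  have := cX_lt_card sch n_gt0; move: large.
  case: (nmax S - 1) => [|k]; rewrite ?muln0 ?addn0 //; nia.
split.
  move=> a T [fST Da _]; have [g large_g] := exists_large_determined ccS a large'.
  exists g; exact/(regular_at_row_card fST.1)/(regular_at_determined ccS fST Da).
have [a _] := card_gt0P n_gt0.
have [g large_g] := exists_large_determined ccS a large'.
exists [set a; g]; split; last by rewrite cards2; case: (a != g).
move=> T [fST Dag _].
apply: (complete_regular_fiber fST.1 (Dag g _)); first by rewrite !inE eqxx orbT.
by apply: (regular_at_determined ccS fST (Dag a _) large_g); rewrite !inE eqxx.
Qed.
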